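(* For every integer $n\ge2$, $B(n+2)\ge 2B(n)+1$.
   Context: Fix a field $\mathbb{F}$. All algebras are finite-dimensional, unital, not necessarily associative $\mathbb{F}$-algebras. For a finite generating set $S$ of an algebra $\mathcal{A}$, a word in $S$ is any product (with any bracketing) of finitely many elements of $S$; its length is the number of factors, and $1$ is a word of length $0$. $L_i(S)$ is the linear span of all words in $S$ of length at most $i$. The length of $S$ is $l(S)=\min\{k\ge0: L_k(S)=\mathcal{A}\}$, and $l(\mathcal{A})=\max\{l(S): S\text{ a finite generating set of }\mathcal{A}\}$. For a natural number $n\ge2$, $B(n)$ denotes the maximal integer $l>0$ such that for every $j\in\{1,\ldots,l\}$ there exists an algebra of dimension $n$ and length $j$. *)

From HB Require Import structures.
From mathcomp Require Import all_boot all_order all_algebra.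
Set Implicit Arguments. Unset Strict Implicit. Unset Printing Implicit Defensive.
Import GRing.Theory.
Local Open Scope ring_scope.

(* An n-dimensional unital, not necessarily associative F-algebra is modelled
   on the n-dimensional F-vector space 'rV[F]_n, with a bilinear product
   [mul] and a two-sided unit [one]. *)
Definition is_unital_algebra (F : fieldType) (n : nat)
  (mul : 'rV[F]_n -> 'rV[F]_n -> 'rV[F]_n) (one : 'rV[F]_n) : Prop :=
  [/\ (forall (a : F) u v w, mul (a *: u + v) w = a *: mul u w + mul v w),
      (forall (a : F) u v w, mul w (a *: u + v) = a *: mul w u + mul w v),
      (forall u, mul one u = u) & (forall u, mul u one = u)].

Inductive is_word (F : fieldType) (n : nat)
  (mul : 'rV[F]_n -> 'rV[F]_n -> 'rV[F]_n) (one : 'rV[F]_n)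
  (S : seq 'rV[F]_n) : nat -> 'rV[F]_n -> Prop :=
  | word_one : is_word mul one S 0 one
  | word_gen : forall s, s \in S -> is_word mul one S 1 s
  | word_mul : forall a b u w, is_word mul one S a u -> is_word mul one S b w ->
               is_word mul one S (a + b)%N (mul u w).

Definition in_L (F : fieldType) (n : nat)
  (mul : 'rV[F]_n -> 'rV[F]_n -> 'rV[F]_n) (one : 'rV[F]_n)
  (S : seq 'rV[F]_n) (i : nat) (v : 'rV[F]_n) : Prop :=
  exists (ws : seq 'rV[F]_n) (cs : seq F),
    [/\ size cs = size ws,
        (forall w, w \in ws -> exists2 k, (k <= i)%N & is_word mul one S k w) &
        v = \sum_(k < size ws) cs`_k *: ws`_k].

Definition L_full (F : fieldType) (n : nat)
  (mul : 'rV[F]_n -> 'rV[F]_n -> 'rV[F]_n) (one : 'rV[F]_n)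
  (S : seq 'rV[F]_n) (i : nat) : Prop :=
  forall v, in_L mul one S i v.

Definition set_length (F : fieldType) (n : nat)
  (mul : 'rV[F]_n -> 'rV[F]_n -> 'rV[F]_n) (one : 'rV[F]_n)
  (S : seq 'rV[F]_n) (k : nat) : Prop :=
  L_full mul one S k /\ (forall k', L_full mul one S k' -> (k <= k')%N).

Definition alg_length (F : fieldType) (n : nat)
  (mul : 'rV[F]_n -> 'rV[F]_n -> 'rV[F]_n) (one : 'rV[F]_n) (l : nat) : Prop :=
  (exists S, set_length mul one S l) /\
  (forall S k, set_length mul one S k -> (k <= l)%N).

Definition realizable (F : fieldType) (n j : nat) : Prop :=
  exists (mul : 'rV[F]_n -> 'rV[F]_n -> 'rV[F]_n) (one : 'rV[F]_n),
    is_unital_algebra mul one /\ alg_length mul one j.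

Definition is_B (F : fieldType) (n b : nat) : Prop :=
  [/\ (0 < b)%N,
      (forall j, (1 <= j <= b)%N -> realizable F n j) &
      (forall b', (0 < b')%N -> (forall j, (1 <= j <= b')%N -> realizable F n j) ->
         (b' <= b)%N)].

(** The jumps of a generating set [S] of length [j], i.e. the [d] with
    [L_d(S) <> L_(d-1)(S)], form a set [J] of integers in [[1, j]] containing
    [1] and [j] in which every [d > 1] is a sum of two elements: a word of
    length [d] is a product of two words, each lying in [L] of the last jump
    below its length, so if no two jumps add up to [d] the word already lies in
    [L_(d-1)(S)].  Each jump contributes a new independent vector, so
    [|J| < dim A], and since the elements of [J] at most double, [j <= 2^dim A].
    Conversely every such [J] with [|J| <= m] is realised by the graded algebra
    of dimension [m + 1] with basis [1], [e_d] for [d] in [J] and extra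
    elements of degree one, where [e_a e_b = e_(a+b)] if [a + b] is in [J] and
    [0] otherwise: its length is [max J].  Adding [2i], or [2i] and [2i + 1],
    to the jump set of an algebra of dimension [n] and length [i] thus yields
    algebras of dimension [n + 2] and lengths [2i] and [2i + 1]. *)

From HB Require Import structures.
From mathcomp Require Import all_boot all_order all_algebra.
From mathcomp Require Import zify boolp.
Set Implicit Arguments. Unset Strict Implicit. Unset Printing Implicit Defensive.
Import GRing.Theory.

Section UnitalAlgebra.
Variables (F : fieldType) (n : nat).
Variables (mul : 'rV[F]_n -> 'rV[F]_n -> 'rV[F]_n) (one : 'rV[F]_n).
Hypothesis mul_unital : is_unital_algebra mul one.
Local Open Scope ring_scope.

Lemma algmul1l u : mul one u = u. Proof. by case: mul_unital. Qed.
Lemma algmul1r u : mul u one = u. Proof. by case: mul_unital. Qed.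

Lemma algmul0l w : mul 0 w = 0.
Proof.
case: mul_unital => linl _ _ _; have := linl 1 0 0 w.
by rewrite !scale1r addr0 => h; apply: (@addrI _ (mul 0 w)); rewrite addr0 -h.
Qed.

Lemma algmul0r w : mul w 0 = 0.
Proof.
case: mul_unital => _ linr _ _; have := linr 1 0 0 w.
by rewrite !scale1r addr0 => h; apply: (@addrI _ (mul w 0)); rewrite addr0 -h.
Qed.

Lemma algmulDl u v w : mul (u + v) w = mul u w + mul v w.
Proof. by case: mul_unital => linl _ _ _; rewrite -{1}[u]scale1r linl scale1r. Qed.

Lemma algmulZl a u w : mul (a *: u) w = a *: mul u w.
Proof. by case: mul_unital => linl _ _ _; rewrite -[a *: u]addr0 linl algmul0l addr0. Qed.

Lemma algmulDr u v w : mul w (u + v) = mul w u + mul w v.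
Proof. by case: mul_unital => _ linr _ _; rewrite -{1}[u]scale1r linr scale1r. Qed.

Lemma algmulZr a u w : mul w (a *: u) = a *: mul w u.
Proof. by case: mul_unital => _ linr _ _; rewrite -[a *: u]addr0 linr algmul0r addr0. Qed.

Lemma algmulBl u v w : mul (u - v) w = mul u w - mul v w.
Proof. by rewrite algmulDl -scaleN1r algmulZl scaleN1r. Qed.

Lemma algmulBr u v w : mul w (u - v) = mul w u - mul w v.
Proof. by rewrite algmulDr -scaleN1r algmulZr scaleN1r. Qed.

Lemma algone_neq0 : (0 < n)%N -> one != 0.
Proof.
move=> n_gt0; apply: contra_neq (oner_neq0 F) => one0.
have := algmul1l (const_mx 1); rewrite one0 algmul0l => /rowP/(_ (Ordinal n_gt0)).
by rewrite !mxE.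
Qed.

Variable S : seq 'rV[F]_n.
Local Notation L := (in_L mul one S).
Local Notation word := (is_word mul one S).

Lemma word0_one k w : word k w -> k = 0%N -> w = one.
Proof.
elim=> [//|s _ //|a b u v _ IHu _ IHv] /eqP.
by rewrite addn_eq0 => /andP[/eqP/IHu -> /eqP/IHv ->]; rewrite algmul1l.
Qed.

Lemma in_L0 i : L i 0.
Proof. by exists [::], [::]; split => //; rewrite big_ord0. Qed.

Lemma in_L_word i k w : (k <= i)%N -> word k w -> L i w.
Proof.
move=> ki Hw; exists [:: w], [:: 1]; split => //; last by rewrite big_ord1 scale1r.
by move=> x; rewrite inE => /eqP ->; exists k.
Qed.

Lemma in_L_one i : L i one.
Proof. exact: (in_L_word (leq0n i) (word_one _ _ _)). Qed.

Lemma in_LD i x y : L i x -> L i y -> L i (x + y).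
Proof.
move=> [ws1 [cs1 [s1 w1 ->]]] [ws2 [cs2 [s2 w2 ->]]].
exists (ws1 ++ ws2), (cs1 ++ cs2); split.
- by rewrite !size_cat s1 s2.
- by move=> w; rewrite mem_cat => /orP[/w1|/w2].
rewrite size_cat big_split_ord; congr (_ + _); apply: eq_bigr => k _ /=.
  by rewrite !nth_cat s1 ltn_ord.
by rewrite !nth_cat s1 ltnNge leq_addr addKn.
Qed.

Lemma in_LZ i a x : L i x -> L i (a *: x).
Proof.
move=> [ws [cs [s w ->]]]; exists ws, [seq a * c | c <- cs]; split => //.
  by rewrite size_map.
rewrite scaler_sumr; apply: eq_bigr => k _.
by rewrite (nth_map 0) ?s // scalerA.
Qed.

Lemma in_L_sum i I (r : seq I) (f : I -> 'rV[F]_n) :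
  (forall k, L i (f k)) -> L i (\sum_(k <- r) f k).
Proof. by move=> Lf; elim/big_ind: _ => //; [apply: in_L0 | apply: in_LD]. Qed.

Lemma in_L_le i j x : (i <= j)%N -> L i x -> L j x.
Proof.
move=> ij [ws [cs [s w ->]]]; exists ws, cs; split => // v /w[k ki Hk].
by exists k => //; apply: leq_trans ij.
Qed.

Lemma in_L_ind (P : 'rV[F]_n -> Prop) i :
  P 0 -> (forall x y, P x -> P y -> P (x + y)) -> (forall a x, P x -> P (a *: x)) ->
  (forall k w, (k <= i)%N -> word k w -> P w) -> forall v, L i v -> P v.
Proof.
move=> P0 PD PZ Pw v [ws [cs [_ w ->]]].
elim/big_ind: _ => // k _; apply: PZ.
by have /w[k' k'i /Pw] := mem_nth 0 (ltn_ord k); apply.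
Qed.

Lemma in_L_mul a b x y : L a x -> L b y -> L (a + b) (mul x y).
Proof.
move=> Lx Ly; elim/in_L_ind: x / Lx.
- by rewrite algmul0l; apply: in_L0.
- by move=> u v; rewrite algmulDl; apply: in_LD.
- by move=> c u; rewrite algmulZl; apply: in_LZ.
move=> k u ka Hu; elim/in_L_ind: y / Ly.
- by rewrite algmul0r; apply: in_L0.
- by move=> v w; rewrite algmulDr; apply: in_LD.
- by move=> c v; rewrite algmulZr; apply: in_LZ.
move=> k' v k'b Hv; apply: (@in_L_word _ (k + k')); first exact: leq_add.
exact: word_mul.
Qed.

Lemma in_L0_line v : L 0 v -> v \in <[one]>%VS.
Proof.
elim/in_L_ind => [||a x|k w]; [exact: mem0v | exact: memvD | exact: memvZ |].
by rewrite leqn0 => /eqP k0 /word0_one -> //; apply: memv_line.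
Qed.

Lemma not_L_full0 : (1 < n)%N -> ~ L_full mul one S 0.
Proof.
move=> n_gt1 full0; have /dimvS : (fullv <= <[one]>)%VS.
  by apply/subvP => v _; apply: in_L0_line (full0 v).
by rewrite dimvf dim_matrix mul1r => /(leq_trans n_gt1); rewrite ltnNge dim_vline leq_b1.
Qed.

End UnitalAlgebra.

Definition jump_set (J : seq nat) (D : nat) : Prop :=
  [/\ uniq J, {in J, forall x, 0 < x <= D}, 1 \in J, D \in J &
      {in J, forall x, 1 < x -> exists a b, [/\ a \in J, b \in J & a + b = x]}].

Section Jumps.
Variables (F : fieldType) (n : nat).
Variables (mul : 'rV[F]_n -> 'rV[F]_n -> 'rV[F]_n) (one : 'rV[F]_n) (S : seq 'rV[F]_n).
Hypothesis mul_unital : is_unital_algebra mul one.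

Local Notation L := (in_L mul one S).
Local Notation word := (is_word mul one S).

Definition jump d := exists v, L d v /\ ~ L d.-1 v.

Lemma jump_gt0 d : jump d -> 0 < d.
Proof. by case: d => // -[v []]. Qed.

Lemma in_L_last_jump d v : L d v ->
  exists2 d', d' <= d & (d' = 0 \/ jump d') /\ L d' v.
Proof.
elim: d v => [|d IHd] v Lv; first by exists 0 => //; split; [left|].
have [jd|njd] := pselect (jump d.+1); first by exists d.+1 => //; split; [right|].
have /IHd[d' d'd [jd' Ld']] : L d v.
  by apply: contrapT => nLv; apply: njd; exists v.
by exists d' => //; apply: ltnW.
Qed.

Lemma jump_split d : jump d -> 1 < d ->
  exists a b, [/\ jump a, jump b & (a + b) = d].
Proof.
move=> [v [Lv nLv]] d1; apply: contrapT => nsplit; apply: nLv.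
elim/in_L_ind: v / Lv => [||c x|k w kd Hw]; [exact: in_L0 | exact: in_LD | exact: in_LZ |].
elim: Hw kd => [|s Ss|a b u v Hu IHu Hv IHv] kd.
- exact: in_L_one.
- by apply: (in_L_word _ (word_gen _ _ Ss)); case: (d) d1.
have [ab_lt|ab_ge] := ltnP (a + b) d.
  by apply: (in_L_word _ (word_mul Hu Hv)); case: (d) ab_lt.
have ab_d : (a + b) = d by apply/eqP; rewrite eqn_leq kd ab_ge.
have [a0|a_gt0] := posnP a.
  by rewrite (word0_one mul_unital Hu a0) algmul1l //; apply: IHv; lia.
have [b0|b_gt0] := posnP b.
  by rewrite (word0_one mul_unital Hv b0) algmul1r //; apply: IHu; lia.
have [a' a'a [ja' La']] := in_L_last_jump (in_L_word (leqnn a) Hu).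
have [b' b'b [jb' Lb']] := in_L_last_jump (in_L_word (leqnn b) Hv).
have [lt|ge] := ltnP (a' + b') d.
  by apply: in_L_le (in_L_mul mul_unital La' Lb'); case: (d) lt.
have [ea eb] : a' = a /\ b' = b by lia.
case: ja' => [|ja]; first lia.
case: jb' => [|jb]; first lia.
by exfalso; apply: nsplit; exists a, b; split => //; [rewrite -ea | rewrite -eb].
Qed.

Lemma jump1 d : jump d -> jump 1.
Proof.
elim/ltn_ind: d => d IHd jd; have d_gt0 := jump_gt0 jd.
have [d1|] := ltnP 1 d; last by case: d {IHd} d_gt0 jd => [|[]].
have [a [b [ja jb ab_d]]] := jump_split jd d1.
by apply: (IHd a) => //; have := jump_gt0 jb; lia.
Qed.

Hypothesis one_neq0 : one != 0%R.

Lemma free_jumps (K : seq nat) : sorted (fun x y => y < x) K -> {in K, forall d, jump d} ->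
  exists X : seq 'rV[F]_n,
    [/\ size X = (size K).+1, free X & forall x, x \in <<X>>%VS -> L (head 0 K) x].
Proof.
elim: K => [|d K IHK] /= sK jK.
  exists [:: one]; split => //; first by rewrite /free span_seq1 dim_vline one_neq0.
  by move=> x; rewrite span_seq1 => /vlineP[c ->]; apply/in_LZ/in_L_one.
have [sK' Klt] : sorted (fun x y => y < x) K /\ all (fun y => y < d) K.
  by move: sK; rewrite path_sortedE; [case/andP | move=> ? ? ? /=; lia].
have [X [sX fX LX]] := IHK sK' (fun x xK => jK x (mem_behead (s := d :: K) xK)).
have [v [Lv nLv]] := jK d (mem_head d K).
have hd_lt : head 0 K < d.
  by case: (K) Klt => [|k K'] /=; [rewrite (jump_gt0 (jK d (mem_head d K))) | case/andP].
exists (v :: X); split => /=; first by rewrite sX.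
  rewrite free_cons fX andbT; apply: contra_notN nLv => /LX.
  by apply: in_L_le; case: (d) hd_lt.
move=> x; rewrite span_cons => /memv_addP[y /vlineP[c ->] [z /LX Lz ->]].
by apply: in_LD; [exact: in_LZ | apply: in_L_le Lz; apply: ltnW].
Qed.

Lemma size_jumps_lt (K : seq nat) : sorted ltn K -> {in K, forall d, jump d} ->
  size K < n.
Proof.
move=> sK jK.
have rsK : sorted (fun x y => y < x) (rev K) by rewrite rev_sorted.
have rjK : {in rev K, forall d, jump d} by move=> d; rewrite mem_rev; apply: jK.
have [X [sX /eqP fX _]] := free_jumps rsK rjK.
by have := dimvS (subvf <<X>>%VS); rewrite fX sX size_rev dimvf dim_matrix mul1r.
Qed.

End Jumps.

Section JumpSet.
Variables (F : fieldType) (n : nat).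
Variables (mul : 'rV[F]_n -> 'rV[F]_n -> 'rV[F]_n) (one : 'rV[F]_n) (S : seq 'rV[F]_n).
Hypotheses (mul_unital : is_unital_algebra mul one) (n_gt1 : 1 < n).
Variable j : nat.
Hypothesis S_length : set_length mul one S j.

Local Notation jump := (jump mul one S).

Lemma jump_length : jump j.
Proof.
have [full_j min_j] := S_length.
have j_gt0 : 0 < j.
  by rewrite lt0n; apply/eqP => j0; apply: (not_L_full0 mul_unital n_gt1); rewrite -j0.
have [v nLv] : exists v, ~ in_L mul one S j.-1 v.
  apply: contrapT => nex; have full_j1 : L_full mul one S j.-1.
    by move=> v; apply: contrapT => nLv; apply: nex; exists v.
  by have := min_j _ full_j1; lia.
by exists v.
Qed.

Lemma jump_le d : jump d -> d <= j.
Proof.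
case=> v [_ nLv]; rewrite leqNgt; apply/negP => jd; apply: nLv.
by apply: in_L_le (S_length.1 v); case: (d) jd.
Qed.

Definition jumps := [seq d <- iota 1 j | `[< jump d >]].

Lemma mem_jumps d : d \in jumps <-> jump d.
Proof.
rewrite mem_filter mem_iota add1n ltnS; split => [/andP[/asboolP] //|jd].
by rewrite (asboolT jd) jump_le // (jump_gt0 jd).
Qed.

Lemma jump_set_jumps : jump_set jumps j /\ size jumps < n.
Proof.
have sorted_jumps : sorted ltn jumps by apply: (sorted_filter ltn_trans); apply: iota_ltn_sorted.
have one_neq0 := algone_neq0 mul_unital (ltnW n_gt1).
split; last by apply: (@size_jumps_lt _ _ mul _ S one_neq0) => // d /mem_jumps.
split.
- exact/filter_uniq/iota_uniq.
- by move=> d /mem_jumps jd; rewrite (jump_gt0 jd) (jump_le jd).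
- exact/mem_jumps/(jump1 mul_unital jump_length).
- exact/mem_jumps/jump_length.
move=> d /mem_jumps jd d_gt1; have [a [b [ja jb ab_d]]] := jump_split mul_unital jd d_gt1.
by exists a, b; split => //; apply/mem_jumps.
Qed.

End JumpSet.

Lemma count_lt_mem (J : seq nat) a x : a \in J -> a < x ->
  count (fun y => y < a) J < count (fun y => y < x) J.
Proof.
move=> aJ ax; elim: J aJ => //= y J IHJ; rewrite inE => /orP[/eqP <-|aJ].
  by rewrite ltnn ax add0n add1n ltnS; apply: sub_count => z /= /ltn_trans; apply.
by have := IHJ aJ; case: (ltnP y a) => /=; case: (ltnP y x) => /=; lia.
Qed.

Lemma jump_set_le_exp J D : jump_set J D -> D <= 2 ^ size J.
Proof.
case=> _ J_pos _ DJ J_split.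
suff le_exp x : x \in J -> x <= 2 ^ count (fun y => y < x) J.
  by apply: leq_trans (le_exp D DJ) _; rewrite leq_exp2l // count_size.
elim/ltn_ind: x => x IHx xJ; have [x_gt1|x_le1] := ltnP 1 x; last first.
  by apply: leq_trans x_le1 _; rewrite expn_gt0.
have [a [b [aJ bJ ab_x]]] := J_split x xJ x_gt1.
have /andP[a_gt0 _] := J_pos a aJ; have /andP[b_gt0 _] := J_pos b bJ.
have ax : a < x by lia.
have bx : b < x by lia.
have := count_lt_mem aJ ax; have := count_lt_mem bJ bx.
set c := count (fun y => y < x) J => cb ca.
have le_half y : y < c -> 2 ^ y <= 2 ^ c.-1 by move=> yc; rewrite leq_exp2l //; lia.
rewrite -ab_x -(prednK (leq_ltn_trans (leq0n _) ca)) expnS mul2n -addnn.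
by apply: leq_add; apply: leq_trans (le_half _ _); [apply: IHx | | apply: IHx |].
Qed.

Lemma jump_set_rcons J D a b : jump_set J D -> a \in J -> b \in J -> D < a + b ->
  jump_set (rcons J (a + b)) (a + b).
Proof.
case=> uJ J_pos oneJ _ J_split aJ bJ D_ab.
have /andP[a_gt0 _] := J_pos a aJ.
have J_lt x : x \in J -> 0 < x < a + b.
  by move=> /J_pos /andP[x_gt0 xD]; rewrite x_gt0 (leq_ltn_trans xD D_ab).
split.
- rewrite rcons_uniq uJ andbT; apply/negP => /J_lt; lia.
- by move=> x; rewrite mem_rcons inE => /orP[/eqP ->|/J_lt/andP[-> /ltnW]] //; lia.
- by rewrite mem_rcons inE oneJ orbT.
- by rewrite mem_rcons mem_head.
move=> x; rewrite mem_rcons inE => /orP[/eqP -> _|xJ /(J_split x xJ)[a' [b' [a'J b'J <-]]]].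
  by exists a, b; rewrite !mem_rcons !inE aJ bJ !orbT.
by exists a', b'; rewrite !mem_rcons !inE a'J b'J !orbT.
Qed.

Section GradedAlgebra.
Variables (F : fieldType) (m : nat) (J : seq nat) (D : nat).
Hypotheses (J_jump : jump_set J D) (J_size : (size J <= m)%N).
Local Open Scope ring_scope.

Local Notation V := 'rV[F]_m.+1.
Local Notation I := 'I_m.+1.

(* Basis vector [0] is the unit, basis vector [k] with [1 <= k <= size J] has
   degree [nth J k.-1], and the remaining basis vectors are extra generators of
   degree [1], the default value of [nth]. *)
Definition deg (k : I) : nat := if k == ord0 then 0%N else nth 1%N J k.-1.
Definition idx (d : nat) : I := inord (index d J).+1.
Definition bvec (k : I) : V := delta_mx 0 k.

Definition table (p q : I) : V :=
  if p == ord0 then bvec q else if q == ord0 then bvec p else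
  if (deg p + deg q)%N \in J then bvec (idx (deg p + deg q)) else 0.

Definition gmul (u v : V) : V := \sum_p \sum_q (u 0 p * v 0 q) *: table p q.

Lemma bvecE q k : bvec q 0 k = (k == q)%:R.
Proof. by rewrite mxE eqxx. Qed.

Lemma deg0 : deg ord0 = 0%N.
Proof. by rewrite /deg eqxx. Qed.

Lemma deg_neq0 k : k != ord0 -> deg k = nth 1%N J k.-1.
Proof. by rewrite /deg => /negbTE ->. Qed.

Lemma deg_bounds k : k != ord0 -> (0 < deg k <= D)%N.
Proof.
case: J_jump => _ J_pos oneJ _ _ /deg_neq0 ->.
have [lt|ge] := ltnP k.-1 (size J); first exact/J_pos/mem_nth.
by rewrite nth_default //; apply: J_pos.
Qed.

Lemma deg_le k : (deg k <= D)%N.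
Proof. by have [->|/deg_bounds/andP[]//] := eqVneq k ord0; rewrite deg0. Qed.

Lemma deg_eq0 k : (deg k == 0%N) = (k == ord0).
Proof.
have [->|k0] := eqVneq k ord0; first by rewrite deg0.
by have /andP[/lt0n_neq0/negbTE] := deg_bounds k0.
Qed.

Lemma idx_val d : d \in J -> idx d = (index d J).+1 :> nat.
Proof. by move=> dJ; rewrite inordK // ltnS (leq_trans _ J_size) // index_mem. Qed.

Lemma idx_neq0 d : d \in J -> idx d != ord0.
Proof. by move=> dJ; rewrite -val_eqE /= idx_val. Qed.

Lemma deg_idx d : d \in J -> deg (idx d) = d.
Proof. by move=> dJ; rewrite deg_neq0 ?idx_neq0 // idx_val // nth_index. Qed.

Lemma idx_deg k : (1 < deg k)%N -> idx (deg k) = k.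
Proof.
have [->|k0] := eqVneq k ord0; first by rewrite deg0.
rewrite deg_neq0 //; have [lt _|ge] := ltnP k.-1 (size J); last by rewrite nth_default.
case: J_jump => uJ _ _ _ _; apply: val_inj.
by rewrite /idx index_uniq // prednK ?lt0n // inord_val.
Qed.

Lemma deg_mem k : (1 < deg k)%N -> deg k \in J.
Proof.
have [->|k0] := eqVneq k ord0; first by rewrite deg0.
rewrite deg_neq0 //; have [lt _|ge] := ltnP k.-1 (size J); first exact: mem_nth.
by rewrite nth_default.
Qed.

Lemma gmulE u v k : gmul u v 0 k = \sum_p \sum_q u 0 p * v 0 q * table p q 0 k.
Proof.
by rewrite summxE; apply: eq_bigr => p _; rewrite summxE; apply: eq_bigr => q _; rewrite mxE.
Qed.

Lemma gmul_bvecl p v : gmul (bvec p) v = \sum_q v 0 q *: table p q.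
Proof.
rewrite /gmul (bigD1 p) //= [X in _ + X]big1 => [|p' p'p].
  by rewrite addr0; apply: eq_bigr => q _; rewrite bvecE eqxx mul1r.
by apply: big1 => q _; rewrite bvecE (negbTE p'p) mul0r scale0r.
Qed.

Lemma gmul_bvecr u q : gmul u (bvec q) = \sum_p u 0 p *: table p q.
Proof.
apply: eq_bigr => p _; rewrite (bigD1 q) //= [X in _ + X]big1 => [|q' q'q].
  by rewrite addr0 bvecE eqxx mulr1.
by rewrite bvecE (negbTE q'q) mulr0 scale0r.
Qed.

Lemma gmul_bvec p q : gmul (bvec p) (bvec q) = table p q.
Proof.
rewrite gmul_bvecl (bigD1 q) //= [X in _ + X]big1 => [|q' q'q].
  by rewrite addr0 bvecE eqxx scale1r.
by rewrite bvecE (negbTE q'q) scale0r.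
Qed.

Lemma gmul_unital : is_unital_algebra gmul (bvec ord0).
Proof.
split.
- move=> a u v w; rewrite /gmul scaler_sumr -big_split; apply: eq_bigr => p _.
  rewrite scaler_sumr -big_split; apply: eq_bigr => q _.
  by rewrite !mxE mulrDl scalerDl -mulrA scalerA.
- move=> a u v w; rewrite /gmul scaler_sumr -big_split; apply: eq_bigr => p _.
  rewrite scaler_sumr -big_split; apply: eq_bigr => q _.
  by rewrite !mxE mulrDr scalerDl mulrCA scalerA.
- move=> u; rewrite gmul_bvecl [RHS]row_sum_delta; apply: eq_bigr => q _.
  by rewrite /table eqxx.
- move=> u; rewrite gmul_bvecr [RHS]row_sum_delta; apply: eq_bigr => p _.
  by rewrite /table; case: eqP => [->|_]; rewrite ?eqxx.
Qed.

Definition homog (d : nat) (x : V) := forall k, deg k != d -> x 0 k = 0.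
Definition filt (d : nat) (x : V) := forall k, (deg k < d)%N -> x 0 k = 0.

Lemma homog_bvec k : homog (deg k) (bvec k).
Proof. by move=> k'; rewrite bvecE; have [->|] := eqVneq k' k; rewrite ?eqxx. Qed.

Lemma filt_bvec k : filt (deg k) (bvec k).
Proof. by move=> k'; rewrite bvecE; have [->|] := eqVneq k' k; rewrite ?ltnn. Qed.

Lemma homog_table p q : homog (deg p + deg q) (table p q).
Proof.
rewrite /table; have [->|p0] := eqVneq p ord0; first by rewrite deg0; apply: homog_bvec.
have [->|q0] := eqVneq q ord0; first by rewrite deg0 addn0; apply: homog_bvec.
case: ifP => [pqJ|_]; last by move=> k _; rewrite mxE.
by rewrite -{1}(deg_idx pqJ); apply: homog_bvec.
Qed.

Lemma homog_gmul a b x y : homog a x -> homog b y -> homog (a + b) (gmul x y).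
Proof.
move=> hx hy k hk; rewrite gmulE big1 // => p _; rewrite big1 // => q _.
have [pa|/hx->] := eqVneq (deg p) a; last by rewrite !mul0r.
have [qb|/hy->] := eqVneq (deg q) b; last by rewrite mulr0 mul0r.
by rewrite homog_table ?mulr0 // pa qb.
Qed.

Lemma filt_gmul a b x y : filt a x -> filt b y -> filt (a + b) (gmul x y).
Proof.
move=> fx fy k hk; rewrite gmulE big1 // => p _; rewrite big1 // => q _.
have [/fx->|ap] := ltnP (deg p) a; first by rewrite !mul0r.
have [/fy->|bq] := ltnP (deg q) b; first by rewrite mulr0 mul0r.
rewrite homog_table ?mulr0 //; apply: contraTneq hk => ->; rewrite -leqNgt.
exact: leq_add.
Qed.

Section GeneratingSet.
Variable S : seq V.
Local Notation L := (in_L gmul (bvec ord0) S).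

Definition approx (d : nat) (x : V) := exists2 y, L d y & filt d.+1 (x - y).

Lemma approx_gmul a b x z : filt a x -> filt b z -> approx a x -> approx b z ->
  approx (a + b) (gmul x z).
Proof.
move=> fx fz [y Ly fg] [w Lw fh]; exists (gmul y w); first exact: (in_L_mul gmul_unital).
rewrite -(subKr x y) -(subKr z w); move: (x - y) (z - w) fg fh => g h fg fh.
have f1 : filt (a + b).+1 (gmul x h) by rewrite -addnS; apply: filt_gmul.
have f2 : filt (a + b).+1 (gmul g z) by rewrite -addSn; apply: filt_gmul.
have f3 : filt (a + b).+1 (gmul g h).
  by move=> k hk; apply: (filt_gmul fg fh); lia.
rewrite !(algmulBl gmul_unital, algmulBr gmul_unital) => k hk.
by rewrite !mxE (f1 k hk) (f2 k hk) (f3 k hk) !subr0 subrr.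
Qed.

Lemma gmul_bvec_idx a b : a \in J -> b \in J -> (a + b)%N \in J ->
  gmul (bvec (idx a)) (bvec (idx b)) = bvec (idx (a + b)).
Proof.
by move=> aJ bJ abJ; rewrite gmul_bvec /table !(negbTE (idx_neq0 _)) // !deg_idx // abJ.
Qed.

Lemma approx_bvec : (forall g, deg g = 1%N -> approx 1 (bvec g)) ->
  forall k, approx (deg k) (bvec k).
Proof.
move=> approx1; suff approx_deg d k : deg k = d -> approx d (bvec k) by move=> k; apply: approx_deg.
elim/ltn_ind: d k => d IHd k dk; subst d; have [->|k0] := eqVneq k ord0.
  by exists (bvec ord0); [apply: in_L_one | rewrite subrr => ? _; rewrite mxE].
have [k_gt1|] := ltnP 1 (deg k); last first.
  move=> k_le1; have /andP[k_gt0 _] := deg_bounds k0.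
  have k1 : deg k = 1%N by lia.
  by rewrite k1; apply: approx1.
have [_ J_pos _ _ J_split] := J_jump.
have [a [b [aJ bJ ab_k]]] := J_split _ (deg_mem k_gt1) k_gt1.
have /andP[a_gt0 _] := J_pos a aJ; have /andP[b_gt0 _] := J_pos b bJ.
have -> : bvec k = gmul (bvec (idx a)) (bvec (idx b)).
  by rewrite gmul_bvec_idx ?ab_k ?deg_mem ?idx_deg.
have approx_idx c : c \in J -> (c < deg k)%N -> approx c (bvec (idx c)).
  by move=> cJ ck; apply: IHd ck _ (deg_idx cJ).
rewrite -ab_k; apply: approx_gmul; try (apply: approx_idx => //; lia).
  by rewrite -{1}(deg_idx aJ); apply: filt_bvec.
by rewrite -{1}(deg_idx bJ); apply: filt_bvec.
Qed.

Lemma L_full_of_approx : (forall k, approx (deg k) (bvec k)) -> L_full gmul (bvec ord0) S D.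
Proof.
move=> approxS.
suff L_bvec t k : (D - deg k)%N = t -> L D (bvec k).
  by move=> v; rewrite [v]row_sum_delta; apply: in_L_sum => k; apply/in_LZ/(L_bvec _ k erefl).
elim/ltn_ind: t k => t IHt k Dk.
have [y Ly fy] := approxS k.
rewrite -(subrK y (bvec k)) [bvec k - y]row_sum_delta.
apply: in_LD; last exact: in_L_le (deg_le k) Ly.
apply: in_L_sum => k'; have [lt|ge] := ltnP (deg k) (deg k').
  apply/in_LZ/(IHt (D - deg k')%N) => //; have := deg_le k'; lia.
by rewrite fy // scale0r; apply: in_L0.
Qed.

Definition deg1_part (x : V) : V := x *m diag_mx (\row_k (deg k == 1%N)%:R).
HB.instance Definition _ :=
  GRing.Linear.copy deg1_part (mulmxr (diag_mx (\row_k (deg k == 1%N)%:R))).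

Lemma deg1_partE x k : deg1_part x 0 k = if deg k == 1%N then x 0 k else 0.
Proof. by rewrite /deg1_part mul_mx_diag !mxE; case: ifP; rewrite ?mulr1 ?mulr0. Qed.

Lemma deg1_part_filt2 x : filt 2 x -> deg1_part x = 0.
Proof.
by move=> fx; apply/rowP => k; rewrite deg1_partE mxE; case: eqP => // k1; rewrite fx ?k1.
Qed.

Lemma filt2_sub_deg1_part x : filt 2 (deg1_part x - (x - x 0 ord0 *: bvec ord0)).
Proof.
move=> k k_lt2; rewrite mxE deg1_partE !mxE eqxx.
have [->|k0] := eqVneq k ord0; first by rewrite deg0 mulr1 subrr subr0.
have /andP[k_gt0 _] := deg_bounds k0; have -> : deg k = 1%N by lia.
by rewrite eqxx mulr0 subr0 subrr.
Qed.

Lemma filt1_sub_const (x : V) : filt 1 (x - x 0 ord0 *: bvec ord0).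
Proof.
move=> k; rewrite ltnS leqn0 deg_eq0 => /eqP ->.
by rewrite !mxE eqxx mulr1 subrr.
Qed.

Lemma deg1_part_one : deg1_part (bvec ord0) = 0.
Proof.
apply/rowP => k; rewrite deg1_partE bvecE mxE.
by case: ifP => // /eqP; case: eqP => // ->; rewrite deg0.
Qed.

Lemma deg1_part_gmul u w :
  deg1_part (gmul u w) = u 0 ord0 *: deg1_part w + w 0 ord0 *: deg1_part u.
Proof.
have shiftE (x : V) : deg1_part (x - x 0 ord0 *: bvec ord0) = deg1_part x.
  by rewrite linearB linearZ /= deg1_part_one scaler0 subr0.
rewrite -{1}(subrK (u 0 ord0 *: bvec ord0) u) -{1}(subrK (w 0 ord0 *: bvec ord0) w).
have f2 := filt_gmul (filt1_sub_const u) (filt1_sub_const w).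
move: (u - _) (w - _) (shiftE u) (shiftE w) f2 => u' w' <- <- f2.
rewrite !(algmulDl gmul_unital, algmulDr gmul_unital, algmulZl gmul_unital, algmulZr gmul_unital).
rewrite !(algmul1l gmul_unital, algmul1r gmul_unital) !linearD !linearZ /=.
by rewrite deg1_part_filt2 // deg1_part_one !scaler0 addr0 add0r addrC.
Qed.

Lemma deg1_part_word k w :
  is_word gmul (bvec ord0) S k w -> deg1_part w \in <<map deg1_part S>>%VS.
Proof.
elim=> [|s Ss|a b u v _ Su _ Sv].
- by rewrite deg1_part_one mem0v.
- exact/memv_span/map_f.
- by rewrite deg1_part_gmul; apply: memvD; apply: memvZ.
Qed.

(* [deg1_part] maps words into the span of [deg1_part S], so the degree-one
   parts of a generating set span the degree-one component. *)
Lemma approx_deg1 l : L_full gmul (bvec ord0) S l ->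
  forall g, deg g = 1%N -> approx 1 (bvec g).
Proof.
move=> S_full g g1.
have : deg1_part (bvec g) \in <<map deg1_part S>>%VS.
  elim/in_L_ind: (bvec g) / (S_full (bvec g)) => [||c x|k w _ /deg1_part_word //].
  - by rewrite linear0 mem0v.
  - by move=> x y; rewrite linearD; apply: memvD.
  - by rewrite linearZ; apply: memvZ.
have -> : deg1_part (bvec g) = bvec g.
  apply/rowP => k; rewrite deg1_partE bvecE.
  by case: (eqVneq k g) => [->|_]; [rewrite g1 | case: ifP].
move/(coord_span (X := in_tuple (map deg1_part S))) => bvec_g.
exists (\sum_i coord (in_tuple (map deg1_part S)) i (bvec g) *: (S`_i - S`_i 0 ord0 *: bvec ord0)).
  apply: in_L_sum => i; have iS : (i < size S)%N by case: i => /= i; rewrite size_map.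
  apply: in_LZ; apply: in_LD; last by rewrite -scaleNr; apply/in_LZ/in_L_one.
  exact: (in_L_word _ (word_gen _ _ (mem_nth 0 iS))).
rewrite {1}bvec_g -sumrB => k k_lt2; rewrite summxE big1 // => i _.
have iS : (i < size S)%N by case: i => /= i; rewrite size_map.
by rewrite -scalerBr mxE (nth_map 0) // filt2_sub_deg1_part ?mulr0.
Qed.

End GeneratingSet.

Definition deg1_basis : seq V := [seq bvec k | k <- enum I & deg k == 1%N].

Lemma homog_deg1_basis_word k w : is_word gmul (bvec ord0) deg1_basis k w -> homog k w.
Proof.
elim=> [|s /mapP[g]|a b u v _ hu _ hv].
- by rewrite -deg0; apply: homog_bvec.
- by rewrite mem_filter mem_enum andbT => /eqP g1 ->; rewrite -g1; apply: homog_bvec.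
- exact: homog_gmul.
Qed.

Lemma deg1_basis_length : set_length gmul (bvec ord0) deg1_basis D.
Proof.
split.
  apply/L_full_of_approx/approx_bvec => g g1.
  exists (bvec g); last by rewrite subrr => k _; rewrite mxE.
  by apply: (in_L_word _ (word_gen _ _ _)) => //; apply/map_f; rewrite mem_filter g1 mem_enum.
move=> l full_l; rewrite leqNgt; apply/negP => l_lt.
have DJ : D \in J by case: J_jump.
suff: bvec (idx D) 0 (idx D) = 0 by rewrite bvecE eqxx; apply/eqP; exact: oner_neq0.
elim/in_L_ind: (bvec (idx D)) / (full_l (bvec (idx D))) => [||c x|k w kl /homog_deg1_basis_word hw].
- by rewrite mxE.
- by move=> x y x0 y0; rewrite mxE x0 y0 addr0.
- by move=> x0; rewrite mxE x0 mulr0.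
by apply: hw; rewrite deg_idx //; apply: contraTneq l_lt => ->; rewrite -leqNgt.
Qed.

Lemma realizable_jump_set : realizable F m.+1 D.
Proof.
exists gmul, (bvec ord0); split; first exact: gmul_unital.
split; first by exists deg1_basis; apply: deg1_basis_length.
by move=> S k [full_k min_k]; apply/min_k/L_full_of_approx/approx_bvec/approx_deg1/full_k.
Qed.

End GradedAlgebra.

Lemma jump_set_of_realizable (F : fieldType) n j : 1 < n -> realizable F n j ->
  exists2 J, jump_set J j & size J < n.
Proof.
move=> n_gt1 [mul [one [mul_unital [[S S_length] _]]]].
by have [? ?] := jump_set_jumps mul_unital n_gt1 S_length; exists (jumps mul one S j).
Qed.

Lemma realizable_le_exp (F : fieldType) n j : 1 < n -> realizable F n j -> j <= 2 ^ n.
Proof.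
move=> n_gt1 /(jump_set_of_realizable n_gt1)[J /jump_set_le_exp j_le J_lt].
by apply: leq_trans j_le _; rewrite leq_exp2l // ltnW.
Qed.

Lemma realizable1 (F : fieldType) n : realizable F n.+2 1.
Proof.
have jump_set1 : jump_set [:: 1] 1 by split=> // x; rewrite inE => /eqP ->.
exact: (realizable_jump_set F jump_set1).
Qed.

Lemma realizable_double (F : fieldType) n i : 1 < n -> realizable F n i ->
  realizable F n.+2 i.*2 /\ realizable F n.+2 i.*2.+1.
Proof.
move=> n_gt1 /(jump_set_of_realizable n_gt1)[J J_jump J_lt].
have [_ J_pos oneJ iJ _] := J_jump; have /andP[i_gt0 _] := J_pos i iJ.
have J2_jump := jump_set_rcons J_jump iJ iJ ltac:(lia).
have iiJ2 : i + i \in rcons J (i + i) by rewrite mem_rcons mem_head.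
have oneJ2 : 1 \in rcons J (i + i) by rewrite mem_rcons inE oneJ orbT.
have J3_jump := jump_set_rcons J2_jump iiJ2 oneJ2 ltac:(by rewrite addn1).
rewrite -addnn -[(i + i).+1]addn1.
split; [apply: (realizable_jump_set _ J2_jump) | apply: (realizable_jump_set _ J3_jump)].
all: by rewrite !size_rcons; lia.
Qed.

Lemma realizable_upto_double (F : fieldType) n b : 1 < n ->
  (forall i, 1 <= i <= b -> realizable F n i) ->
  forall j, 1 <= j <= b.*2.+1 -> realizable F n.+2 j.
Proof.
move=> n_gt1 real_b j /andP[j_gt0 j_le]; have [j_le1|j_gt1] := leqP j 1.
  have -> : j = 1 by lia.
  exact: realizable1.
have /(real_b _)/(realizable_double n_gt1)[] : 1 <= j./2 <= b by apply/andP; split; lia.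
by move=> real_even real_odd; rewrite -(odd_double_half j); case: (odd j); rewrite ?add1n.
Qed.

Theorem proposition4p10 (F : fieldType) (n b : nat) :
  (2 <= n)%N -> is_B F n b ->
  exists b', is_B F (n + 2) b' /\ (2 * b + 1 <= b')%N.
Proof.
move=> n_gt1 [_ real_b _]; rewrite addn2.
pose P b' := `[< 0 < b' /\ forall j, 1 <= j <= b' -> realizable F n.+2 j >].
have P_double : P (2 * b + 1).
  by apply/asboolP; split; [lia | rewrite mul2n addn1; apply: realizable_upto_double].
have P_bound b' : P b' -> b' <= 2 ^ n.+2.
  by case/asboolP=> b'_gt0 real_b'; apply/realizable_le_exp/real_b'; rewrite ?b'_gt0 //; lia.
have [b' /asboolP[b'_gt0 real_b'] b'_max] := ex_maxnP (ex_intro P _ P_double) P_bound.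
exists b'; split; last exact: b'_max.
by split=> // c c_gt0 real_c; apply/b'_max/asboolP.
Qed.
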